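(* Let $(X,d^\star)$ be a $\star$-metric space, $\{x_n\}_{n\in\mathbb{N}}$ a sequence in $X$ and $x_0\in X$. Then $\{x_n\}$ converges to $x_0$ in the topological space $(X,\mathscr{T}_{d^\star})$ if and only if $\{x_n\}$ converges to $x_0$ under $d^\star$, i.e. for every $\epsilon>0$ there is $k\in\mathbb{N}$ with $d^\star(x_0,x_n)<\epsilon$ for all $n\ge k$.
   Context: A $t$-definer is a function $\star:[0,\infty)\times[0,\infty)\to[0,\infty)$ such that for all $a,b,c\ge 0$: $a\star b=b\star a$; $a\star(b\star c)=(a\star b)\star c$; if $a\le b$ then $a\star c\le b\star c$; $a\star 0=a$; and $\star$ is continuous in its first variable with respect to the Euclidean topology. Given a nonempty set $X$ and a $t$-definer $\star$, a $\star$-metric on $X$ is a function $d^\star:X\times X\to[0,\infty)$ such that for all $x,y,z\in X$: $d^\star(x,y)=0$ iff $x=y$; $d^\star(x,y)=d^\star(y,x)$; and $d^\star(x,y)\le d^\star(x,z)\star d^\star(z,y)$. Put $B_{d^\star}(a,r)=\{x\in X: d^\star(a,x)<r\}$ and let $\mathscr{T}_{d^\star}$ be the topology consisting of all $U\subseteq X$ such that for each $a\in U$ some $B_{d^\star}(a,r)$, $r>0$, is contained in $U$. *)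

From Stdlib Require Import Reals.
Open Scope R_scope.

(* A t-definer: a binary operation on [0,oo), represented as a function
   R -> R -> R whose axioms are required on nonnegative arguments only. *)
Definition t_definer (star : R -> R -> R) : Prop :=
  (forall a b, 0 <= a -> 0 <= b -> 0 <= star a b) /\
  (forall a b, 0 <= a -> 0 <= b -> star a b = star b a) /\
  (forall a b c, 0 <= a -> 0 <= b -> 0 <= c ->
     star a (star b c) = star (star a b) c) /\
  (forall a b c, 0 <= a -> 0 <= b -> 0 <= c -> a <= b -> star a c <= star b c) /\
  (forall a, 0 <= a -> star a 0 = a) /\
  (forall b a, 0 <= b -> 0 <= a ->
     forall eps, 0 < eps -> exists delta, 0 < delta /\
       forall a', 0 <= a' -> Rabs (a' - a) < delta ->
         Rabs (star a' b - star a b) < eps).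

Definition star_metric {X : Type} (star : R -> R -> R) (d : X -> X -> R) : Prop :=
  (forall x y, 0 <= d x y) /\
  (forall x y, d x y = 0 <-> x = y) /\
  (forall x y, d x y = d y x) /\
  (forall x y z, d x y <= star (d x z) (d z y)).

Definition ball_star {X : Type} (d : X -> X -> R) (a : X) (r : R) : X -> Prop :=
  fun x => d a x < r.

Definition open_star {X : Type} (d : X -> X -> R) (U : X -> Prop) : Prop :=
  forall a, U a -> exists r, 0 < r /\ forall x, ball_star d a r x -> U x.

Definition top_converges {X : Type} (d : X -> X -> R) (x : nat -> X) (x0 : X) : Prop :=
  forall U, open_star d U -> U x0 -> exists k, forall n, (k <= n)%nat -> U (x n).

Definition metric_converges {X : Type} (d : X -> X -> R) (x : nat -> X) (x0 : X) : Prop :=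
  forall eps, 0 < eps -> exists k, forall n, (k <= n)%nat -> d x0 (x n) < eps.

(** Every ball [B(a,r)] is open: if [d(a,y) = b < r], continuity of [⋆] in
    its first variable at [0], together with [0 ⋆ b = b], gives [delta > 0]
    with [s ⋆ b < r] whenever [0 <= s < delta]; for [z] in [B(y,delta)] the
    triangle inequality then yields [d(a,z) <= d(y,z) ⋆ d(a,y) < r].  Hence
    the balls around [x0] form a neighbourhood base of [x0], and topological
    convergence coincides with metric convergence. *)

From Stdlib Require Import Reals Lra.
Open Scope R_scope.

Section TDefiner.

Variable star : R -> R -> R.
Hypothesis Hstar : t_definer star.

Lemma t_definer_0_l a : 0 <= a -> star 0 a = a.
Proof.
  destruct Hstar as [_ [Hcom [_ [_ [H0 _]]]]]; intros Ha.
  rewrite Hcom by lra; exact (H0 a Ha).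
Qed.

Lemma t_definer_lt_near_0 b r : 0 <= b -> b < r ->
  exists delta, 0 < delta /\ forall s, 0 <= s -> s < delta -> star s b < r.
Proof.
  destruct Hstar as [_ [_ [_ [_ [_ Hcont]]]]]; intros Hb Hbr.
  destruct (Hcont b 0 Hb (Rle_refl 0) (r - b)) as [delta [Hdelta Hnear]]; [lra|].
  exists delta; split; [exact Hdelta|]; intros s Hs Hsdelta.
  assert (Hs0 : Rabs (s - 0) < delta) by (rewrite Rminus_0_r, Rabs_right; lra).
  specialize (Hnear s Hs Hs0); rewrite t_definer_0_l in Hnear by exact Hb.
  apply Rabs_def2 in Hnear; lra.
Qed.

Lemma ball_star_open (X : Type) (d : X -> X -> R) a r :
  star_metric star d -> open_star d (ball_star d a r).
Proof.
  destruct Hstar as [_ [Hcom _]]; intros [Dnn [_ [_ Dtri]]] y Hy.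
  destruct (t_definer_lt_near_0 (d a y) r (Dnn a y) Hy) as [delta [Hdelta Hnear]].
  exists delta; split; [exact Hdelta|]; intros z Hz; unfold ball_star in *.
  apply Rle_lt_trans with (star (d a y) (d y z)); [apply Dtri|].
  rewrite Hcom by apply Dnn; apply Hnear; [apply Dnn | exact Hz].
Qed.

End TDefiner.

Lemma ball_star_center (X : Type) (d : X -> X -> R) a r :
  (forall x, d x x = 0) -> 0 < r -> ball_star d a r a.
Proof. intros Dxx Hr; unfold ball_star; rewrite Dxx; exact Hr. Qed.

Lemma metric_converges_top_converges (X : Type) (d : X -> X -> R) x x0 :
  metric_converges d x x0 -> top_converges d x x0.
Proof.
  intros Hm U HU Hx0.
  destruct (HU x0 Hx0) as [r [Hr Hball]].
  destruct (Hm r Hr) as [k Hk].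
  exists k; intros n Hn; apply Hball, Hk, Hn.
Qed.

Theorem proposition4p2 (X : Type) (star : R -> R -> R) (d : X -> X -> R)
  (Hstar : t_definer star) (Hd : star_metric star d)
  (x : nat -> X) (x0 : X) :
  top_converges d x x0 <-> metric_converges d x x0.
Proof.
  split; [|apply metric_converges_top_converges].
  intros Ht eps Heps; apply (Ht (ball_star d x0 eps)).
  - exact (ball_star_open star Hstar X d x0 eps Hd).
  - destruct Hd as [_ [Deq _]].
    apply ball_star_center; [intros y; apply Deq; reflexivity | exact Heps].
Qed.
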